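(* In the stochastic linear bandit setting with SGD updates described below, assume $0<\eta\le\lambda/L^2$. Then for all $t\in\mathbb{N}$, almost surely, $$X_t\le X_{t-1}+N_t,\qquad N_t=2\eta\epsilon_t(\theta_{t-1}-\theta_* )^\top x_t-2\eta^3\epsilon_t(\theta_{t-1}-\theta_* )^\top x_t\,\|x_t\|_{V_{t-1}^{-1}}^4+2\epsilon_t^2\eta^2\|x_t\|_{V_{t-1}^{-1}}^2,$$ where $X_t=\|\theta_t-\theta_*\|_{V_t}^2$. In particular $X_t\le X_0+\sum_{i=1}^tN_i$.
   Context: Setting: unknown $\theta_*\in\mathbb{R}^d$ with $\|\theta_*\|_2\le L_*$. At each round $t\ge1$ a decision set $D_t\subseteq\{x\in\mathbb{R}^d:\|x\|_2\le L\}$ is given, the agent chooses $x_t\in D_t$ based on the past, and observes $y_t=\theta_*^\top x_t+\epsilon_t$, where $|\epsilon_t|\le1$ almost surely and $\mathbb{E}[\epsilon_t\mid x_{1:t},\epsilon_{1:t-1}]=0$. With $\lambda>0$ and step size $\eta>0$, the learner maintains $V_0=\lambda I$, $\theta_0=0$, and for $t\ge1$: $V_t=V_{t-1}+\eta x_tx_t^\top$ and $\theta_t=\theta_{t-1}+\eta V_{t-1}^{-1}(y_t-\theta_{t-1}^\top x_t)x_t$. For a positive definite matrix $A$, $\|v\|_A=\sqrt{v^\top Av}$. *)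

From HB Require Import structures.
From mathcomp Require Import all_boot all_order all_algebra.
From mathcomp Require Import reals.
Set Implicit Arguments. Unset Strict Implicit. Unset Printing Implicit Defensive.
Import Order.TTheory GRing.Theory Num.Theory.
Local Open Scope ring_scope.

Section Bandit.
Variables (R : realType) (d : nat).

Definition qform (A : 'M[R]_d) (v w : 'cV[R]_d) : R := (v^T *m A *m w) 0 0.

Definition norm2 (v : 'cV[R]_d) : R := Num.sqrt ((v^T *m v) 0 0).

Definition wnorm (A : 'M[R]_d) (v : 'cV[R]_d) : R := Num.sqrt (qform A v v).

Definition dotv (u v : 'cV[R]_d) : R := (u^T *m v) 0 0.

(* SGD learner state (V_n, theta_n) given the actions x and observations y;
   x 0, y 0 are unused (rounds start at t = 1). *)
Fixpoint sgd_state (lam eta : R) (x : nat -> 'cV[R]_d) (y : nat -> R) (n : nat)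
  : 'M[R]_d * 'cV[R]_d :=
  match n with
  | 0 => (lam%:M, 0)
  | m.+1 =>
      let: (V, th) := sgd_state lam eta x y m in
      (V + eta *: (x n *m (x n)^T),
       th + (eta * (y n - dotv th (x n))) *: (invmx V *m x n))
  end.

Definition Vt lam eta x y n := (sgd_state lam eta x y n).1.
Definition thetat lam eta x y n := (sgd_state lam eta x y n).2.

Definition Xt lam eta x y (thstar : 'cV[R]_d) n : R :=
  wnorm (Vt lam eta x y n) (thetat lam eta x y n - thstar) ^+ 2.

Definition Nt lam eta x y (eps : nat -> R) (thstar : 'cV[R]_d) t : R :=
  let th := thetat lam eta x y t.-1 in
  let Vinv := invmx (Vt lam eta x y t.-1) in
  let g := dotv (th - thstar) (x t) in
  2 * eta * eps t * g
  - 2 * eta ^+ 3 * eps t * g * wnorm Vinv (x t) ^+ 4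
  + 2 * eps t ^+ 2 * eta ^+ 2 * wnorm Vinv (x t) ^+ 2.

End Bandit.

From mathcomp Require Import all_boot all_order all_algebra reals ring lra.
Import Order.TTheory GRing.Theory Num.Theory.
Local Open Scope ring_scope.

(* Write D = theta_{t-1} - theta_*, V = V_{t-1}, x = x_t, g = D^T x,
   s = x^T V^-1 x and c = eta (eps_t - g).  Since y_t - theta_{t-1}^T x = eps_t - g,
   the update reads theta_t - theta_* = D + c V^-1 x and V_t = V + eta x x^T, so
   expanding the quadratic form gives the exact identity
       X_t = X_{t-1} + 2 c g + c^2 s + eta (g + c s)^2.
   Every V_t is symmetric with V_t >= lam I; hence it is invertible and
   lam s <= ||x||^2 <= L^2, so that the step-size condition eta <= lam / L^2 gives
   eta s <= 1.  Under 0 <= eta s <= 1 a purely scalar inequality turns the identity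
   into X_t <= X_{t-1} + N_t, and the second claim follows by telescoping. *)

Section QuadraticForms.
Context {R : realType} {d : nat}.
Implicit Types (A B : 'M[R]_d) (u v w x : 'cV[R]_d).

Lemma mx11_mul (A B : 'M[R]_1) : (A *m B) 0 0 = A 0 0 * B 0 0.
Proof. by rewrite !mxE big_ord1. Qed.

Lemma mx11_tr (A : 'M[R]_1) : A 0 0 = A^T 0 0.
Proof. by rewrite mxE. Qed.

Lemma dotvC u v : dotv u v = dotv v u.
Proof. by rewrite /dotv mx11_tr trmx_mul trmxK. Qed.

Lemma dotvDl u v w : dotv (u + v) w = dotv u w + dotv v w.
Proof. by rewrite /dotv linearD /= mulmxDl mxE. Qed.

Lemma dotvZl c u w : dotv (c *: u) w = c * dotv u w.
Proof. by rewrite /dotv linearZ /= -scalemxAl mxE. Qed.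

Lemma dotvBl u v w : dotv (u - v) w = dotv u w - dotv v w.
Proof. by rewrite dotvDl -scaleN1r dotvZl mulN1r. Qed.

Lemma dotv_ge0 u : 0 <= dotv u u.
Proof. by rewrite /dotv mxE; apply: sumr_ge0 => i _; rewrite mxE -expr2 sqr_ge0. Qed.

Lemma dotv_eq0 u : dotv u u = 0 -> u = 0.
Proof.
rewrite /dotv mxE => /eqP; rewrite psumr_eq0 => [/allP u0|i _]; last first.
  by rewrite mxE -expr2 sqr_ge0.
apply/matrixP => i j; rewrite (ord1 j) mxE.
have := u0 i (mem_index_enum _); rewrite mxE /= => /eqP/eqP.
by rewrite mulf_eq0 orbb => /eqP.
Qed.

Lemma qformE A u w : qform A u w = dotv u (A *m w).
Proof. by rewrite /qform /dotv mulmxA. Qed.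

Lemma qformDl A u v w : qform A (u + v) w = qform A u w + qform A v w.
Proof. by rewrite !qformE dotvDl. Qed.

Lemma qformZl A c u w : qform A (c *: u) w = c * qform A u w.
Proof. by rewrite !qformE dotvZl. Qed.

Lemma qformDr A u v w : qform A w (u + v) = qform A w u + qform A w v.
Proof. by rewrite /qform !mulmxDr mxE. Qed.

Lemma qformZr A c u w : qform A w (c *: u) = c * qform A w u.
Proof. by rewrite /qform -!scalemxAr mxE. Qed.

Lemma qformDm A B u w : qform (A + B) u w = qform A u w + qform B u w.
Proof. by rewrite /qform mulmxDr mulmxDl mxE. Qed.

Lemma qformZm A c u w : qform (c *: A) u w = c * qform A u w.
Proof. by rewrite /qform -scalemxAr -scalemxAl mxE. Qed.

Lemma qform_scalar c u w : qform c%:M u w = c * dotv u w.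
Proof. by rewrite qformE mul_scalar_mx dotvC dotvZl dotvC. Qed.

Lemma qform_outer x u w : qform (x *m x^T) u w = dotv u x * dotv w x.
Proof. by rewrite qformE -mulmxA /dotv mulmxA mx11_mul -/(dotv x w) dotvC. Qed.

Lemma qformC A u w : A^T = A -> qform A u w = qform A w u.
Proof. by move=> symA; rewrite /qform mx11_tr !trmx_mul trmxK symA mulmxA. Qed.

Lemma qform_invmx A u x : A \in unitmx -> qform A u (invmx A *m x) = dotv u x.
Proof. by move=> unitA; rewrite qformE mulmxA mulmxV // mul1mx. Qed.

End QuadraticForms.

Section BoundedBelow.
Context {R : realType} {d : nat}.
Implicit Types (A : 'M[R]_d) (v x : 'cV[R]_d).

Definition bounded_below (lam : R) A :=
  A^T = A /\ forall v, lam * dotv v v <= qform A v v.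

Context {lam : R} {A : 'M[R]_d}.
Hypotheses (lam_gt0 : 0 < lam) (A_bb : bounded_below lam A).

Lemma bounded_below_qform_ge0 v : 0 <= qform A v v.
Proof. exact: le_trans (mulr_ge0 (ltW lam_gt0) (dotv_ge0 v)) (A_bb.2 v). Qed.

(* A null vector v of A would give 0 = v^T A v >= lam ||v||^2 > 0. *)
Lemma bounded_below_unit : A \in unitmx.
Proof.
rewrite unitmxE unitfE; apply/negP => /det0P [v v_neq0 vA0].
have qv0 : qform A v^T v^T = 0 by rewrite /qform trmxK vA0 mul0mx mxE.
have nv0 : dotv v^T v^T = 0.
  apply/eqP; rewrite eq_le dotv_ge0 andbT -(pmulr_rle0 _ lam_gt0) -qv0.
  exact: A_bb.2.
by move: v_neq0; rewrite -(trmxK v) (dotv_eq0 _ nv0) trmx0 eqxx.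
Qed.

Lemma bounded_below_inv_qformE x :
  qform (invmx A) x x = qform A (invmx A *m x) (invmx A *m x).
Proof. by rewrite qform_invmx ?bounded_below_unit // qformE dotvC. Qed.

Lemma bounded_below_inv_qform_ge0 x : 0 <= qform (invmx A) x x.
Proof. by rewrite bounded_below_inv_qformE bounded_below_qform_ge0. Qed.

(* With w = A^-1 x: x^T A^-1 x = w^T A w >= lam ||w||^2, and expanding
   ||x - lam w||^2 >= 0 yields lam x^T A^-1 x <= ||x||^2. *)
Lemma bounded_below_inv_qform x : lam * qform (invmx A) x x <= dotv x x.
Proof.
set w := invmx A *m x.
have sE : qform (invmx A) x x = dotv w x by rewrite qformE dotvC.
have wW : lam * (lam * dotv w w) <= lam * qform (invmx A) x x.
  by rewrite ler_pM2l // bounded_below_inv_qformE A_bb.2.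
have := dotv_ge0 (x + (- lam) *: w).
rewrite !dotvDl !dotvZl (dotvC _ (x + _)) (dotvC _ (x + _)) !dotvDl !dotvZl.
rewrite (dotvC x w) -sE.
nra.
Qed.

End BoundedBelow.

Lemma qform_rank_one_update {R : realType} {d : nat} (V : 'M[R]_d)
    (eta c : R) (x D : 'cV[R]_d) :
  V^T = V -> V \in unitmx ->
  qform (V + eta *: (x *m x^T)) (D + c *: (invmx V *m x)) (D + c *: (invmx V *m x))
  = qform V D D + 2 * c * dotv D x + c ^+ 2 * qform (invmx V) x x
    + eta * (dotv D x + c * qform (invmx V) x x) ^+ 2.
Proof.
move=> symV unitV; set w := invmx V *m x.
have sE : qform (invmx V) x x = dotv w x by rewrite qformE dotvC.
rewrite qformDm qformZm qform_outer qformDl !qformDr !qformZl !qformZr.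
rewrite (qformC _ w D symV) !qform_invmx // dotvDl dotvZl sE.
ring.
Qed.

(* The scalar heart of the bound: with c = eta (e - g) and 0 <= eta s <= 1,
   the increment of the identity above is at most N_t. *)
Lemma sgd_increment_le {R : realType} (g e s eta : R) :
  0 < eta -> 0 <= s -> eta * s <= 1 ->
  2 * (eta * (e - g)) * g + (eta * (e - g)) ^+ 2 * s
    + eta * (g + eta * (e - g) * s) ^+ 2
  <= 2 * eta * e * g - 2 * eta ^+ 3 * e * g * s ^+ 2 + 2 * e ^+ 2 * eta ^+ 2 * s.
Proof.
move=> eta_gt0 s_ge0 etas_le1; rewrite -subr_ge0.
have p_ge0 : 0 <= eta * s by rewrite mulr_ge0 // ltW.
have p2_le : (eta * s) ^+ 2 <= eta * s by rewrite expr2 ler_piMl.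
have -> : 2 * eta * e * g - 2 * eta ^+ 3 * e * g * s ^+ 2 + 2 * e ^+ 2 * eta ^+ 2 * s
    - (2 * (eta * (e - g)) * g + (eta * (e - g)) ^+ 2 * s
       + eta * (g + eta * (e - g) * s) ^+ 2)
  = eta * (g ^+ 2 * (1 + eta * s - (eta * s) ^+ 2)
           + e ^+ 2 * (eta * s) * (1 - eta * s)) by ring.
apply: mulr_ge0; first exact: ltW.
apply: addr_ge0; apply: mulr_ge0; rewrite ?sqr_ge0 //; try lra.
by rewrite mulr_ge0 ?sqr_ge0.
Qed.

(* The step-size condition eta <= lam / L^2 together with lam s <= n <= L^2
   forces eta s <= 1 (the case L = 0 is excluded by eta > 0). *)
Lemma step_size_le1 {R : realType} {lam eta L s n : R} :
  0 < lam -> 0 < eta -> eta <= lam / L ^+ 2 ->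
  lam * s <= n -> n <= L ^+ 2 -> eta * s <= 1.
Proof.
move=> lam_gt0 eta_gt0 eta_le ls_le n_le.
have L2_gt0 : 0 < L ^+ 2.
  rewrite lt_neqAle sqr_ge0 andbT; apply/eqP => L2_0.
  by move: eta_le; rewrite -L2_0 invr0 mulr0 => /(lt_le_trans eta_gt0); rewrite ltxx.
have etaL : eta * L ^+ 2 <= lam by rewrite -ler_pdivlMr.
rewrite -(ler_pM2l lam_gt0) mulr1 mulrCA.
apply: le_trans etaL; rewrite ler_pM2l //; exact: le_trans ls_le n_le.
Qed.

Lemma dotv_le_sqr {R : realType} {d : nat} {v : 'cV[R]_d} {L : R} :
  norm2 v <= L -> dotv v v <= L ^+ 2.
Proof.
move=> vL; rewrite -(sqr_sqrtr (dotv_ge0 v)).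
by rewrite ler_sqr ?nnegrE ?sqrtr_ge0 // (le_trans (sqrtr_ge0 _) vL).
Qed.

Lemma sqr_wnorm {R : realType} {d : nat} (A : 'M[R]_d) (v : 'cV[R]_d) :
  0 <= qform A v v -> wnorm A v ^+ 2 = qform A v v.
Proof. exact: sqr_sqrtr. Qed.

Section SGD.
Context {R : realType} {d : nat}.
Context {lam eta : R} {x : nat -> 'cV[R]_d} {y : nat -> R}.
Notation V := (Vt lam eta x y).
Notation theta := (thetat lam eta x y).

Lemma Vt_S n : V n.+1 = V n + eta *: (x n.+1 *m (x n.+1)^T).
Proof. by rewrite /Vt /=; case: (sgd_state _ _ _ _ n). Qed.

Lemma thetat_S n : theta n.+1 =
  theta n + (eta * (y n.+1 - dotv (theta n) (x n.+1))) *: (invmx (V n) *m x n.+1).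
Proof. by rewrite /Vt /thetat /=; case: (sgd_state _ _ _ _ n). Qed.

Lemma Vt_bounded_below n : 0 <= eta -> bounded_below lam (V n).
Proof.
move=> eta_ge0; elim: n => [|n [symV VlamI]].
  by split=> [|v]; rewrite /Vt /= ?tr_scalar_mx ?qform_scalar.
rewrite Vt_S; split; first by rewrite linearD linearZ /= symV trmx_mul trmxK.
move=> v; rewrite qformDm qformZm qform_outer -expr2.
rewrite -[X in X <= _]addr0 lerD ?VlamI //.
by rewrite mulr_ge0 ?sqr_ge0.
Qed.

Context {thstar : 'cV[R]_d} {eps : nat -> R}.
Hypothesis y_def : forall t, y t = dotv thstar (x t) + eps t.
Hypotheses (lam_gt0 : 0 < lam) (eta_gt0 : 0 < eta).

Lemma Xt_step t :
  eta * qform (invmx (V t)) (x t.+1) (x t.+1) <= 1 ->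
  Xt lam eta x y thstar t.+1 <= Xt lam eta x y thstar t + Nt lam eta x y eps thstar t.+1.
Proof.
have bbV := Vt_bounded_below t (ltW eta_gt0).
have bbV1 := Vt_bounded_below t.+1 (ltW eta_gt0).
have s_ge0 := bounded_below_inv_qform_ge0 lam_gt0 bbV (x t.+1).
have qV_ge0 := bounded_below_qform_ge0 lam_gt0 bbV.
have qV1_ge0 := bounded_below_qform_ge0 lam_gt0 bbV1.
rewrite /Xt /Nt /= -[4%N]/(2 * 2)%N exprM !sqr_wnorm ?qV_ge0 ?qV1_ge0 //.
rewrite [V t.+1]Vt_S thetat_S y_def.
set g := dotv (theta t - thstar) (x t.+1).
have -> : dotv thstar (x t.+1) + eps t.+1 - dotv (theta t) (x t.+1) = eps t.+1 - g.
  by rewrite /g dotvBl; ring.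
rewrite addrAC qform_rank_one_update ?bbV.1 ?(bounded_below_unit lam_gt0 bbV) // -/g.
move=> etas_le1; rewrite -!addrA lerD2l !addrA.
exact: sgd_increment_le.
Qed.

End SGD.

Lemma telescope_le {R : numDomainType} (a b : nat -> R) :
  (forall t, (1 <= t)%N -> a t <= a t.-1 + b t) ->
  forall t, a t <= a 0%N + \sum_(1 <= i < t.+1) b i.
Proof.
move=> step; elim=> [|t IH]; first by rewrite big_geq // addr0.
rewrite big_nat_recr //= addrA.
by apply: le_trans (step t.+1 isT) _; rewrite lerD2r.
Qed.

Theorem mainTheorem8 (R : realType) (d : nat) (L Lstar lam eta : R)
  (thstar : 'cV[R]_d) (D : nat -> 'cV[R]_d -> Prop)
  (x : nat -> 'cV[R]_d) (eps : nat -> R) :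
  norm2 thstar <= Lstar ->
  (forall t v, D t v -> norm2 v <= L) ->
  (forall t, (1 <= t)%N -> D t (x t)) ->
  (forall t, (1 <= t)%N -> `|eps t| <= 1) ->
  0 < lam -> 0 < eta -> eta <= lam / L ^+ 2 ->
  let y := fun t => dotv thstar (x t) + eps t in
  (forall t, (1 <= t)%N ->
     Xt lam eta x y thstar t <= Xt lam eta x y thstar t.-1 + Nt lam eta x y eps thstar t)
  /\
  (forall t, Xt lam eta x y thstar t
             <= Xt lam eta x y thstar 0 + \sum_(1 <= i < t.+1) Nt lam eta x y eps thstar i).
Proof.
move=> _ normD xD _ lam_gt0 eta_gt0 eta_le y.
have step t : (1 <= t)%N ->
    Xt lam eta x y thstar t <= Xt lam eta x y thstar t.-1 + Nt lam eta x y eps thstar t.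
  case: t => // t _.
  have bbV : bounded_below lam (Vt lam eta x y t) := Vt_bounded_below t (ltW eta_gt0).
  have lam_s := bounded_below_inv_qform lam_gt0 bbV (x t.+1).
  have x_L := dotv_le_sqr (normD _ _ (xD t.+1 isT)).
  exact: Xt_step (fun _ => erefl) lam_gt0 eta_gt0 t
           (step_size_le1 lam_gt0 eta_gt0 eta_le lam_s x_L).
by split; last exact: telescope_le.
Qed.
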